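(* Let $d,n\ge2$ and let $w\in G(d,d,n)$ be a parabolic Coxeter element. If $w$ consists of a single simultaneous cycle of length $k$ (all other colored integers fixed), then the interval $[\varepsilon,w]$ in $(G(d,d,n),\le_T)$ is isomorphic to $\mathcal{NC}_{G(1,1,k)}$.
   Context: $G(d,d,n)$ is the group of $n\times n$ monomial matrices with $d$-th roots of unity as nonzero entries whose product is $1$, viewed as permutations of colored integers $k^{(s)}$ ($=\zeta^se_k$, $\zeta=e^{2\pi i/d}$, $k\in[n]$, $s\in\mathbb{Z}/d$). The simultaneous cycle $((k_1^{(t_1)}\;\ldots\;k_r^{(t_r)}))$ is the product over $c\in\mathbb{Z}/d$ of the cycles $(k_1^{(t_1+c)}\ldots k_r^{(t_r+c)})$; its length is $r$. $T$ is the set of reflections, $\ell_T$ the absolute length (minimal number of reflection factors), $u\le_Tv$ iff $\ell_T(v)=\ell_T(u)+\ell_T(u^{-1}v)$. A parabolic Coxeter element is an element $w$ with $w\le_T\gamma'$ for some Coxeter element $\gamma'$ (equivalently a Coxeter element of a parabolic subgroup). $\mathcal{NC}_{G(1,1,k)}$ is the noncrossing partition lattice of $G(1,1,k)\cong\mathfrak{S}_k$, i.e. the interval $[\varepsilon,(1\,2\,\ldots\,k)]$ in $\mathfrak{S}_k$ under absolute order (isomorphic to Kreweras' lattice of noncrossing partitions of $[k]$). *)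

From HB Require Import structures.
From mathcomp Require Import all_boot all_order all_algebra all_fingroup all_field.
Set Implicit Arguments. Unset Strict Implicit. Unset Printing Implicit Defensive.
Import Order.TTheory GRing.Theory Num.Theory.
Local Open Scope ring_scope.

Section AbsOrder.
Variables (A : Type) (mul : A -> A -> A) (one : A) (inv : A -> A) (T : A -> Prop).

Definition factor_len (g : A) (m : nat) : Prop :=
  exists s : seq A, size s = m /\ (forall i, (i < size s)%N -> T (nth one s i)) /\ foldr mul one s = g.

Definition is_abs_len (g : A) (m : nat) : Prop :=
  factor_len g m /\ forall m', factor_len g m' -> (m <= m')%N.

Definition abs_le (u v : A) : Prop :=
  exists a b c, [/\ is_abs_len v a, is_abs_len u b, is_abs_len (mul (inv u) v) c
                 & a = (b + c)%N].
End AbsOrder.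

Definition poset_iso (A B : Type) (X : A -> Prop) (leX : A -> A -> Prop)
  (Y : B -> Prop) (leY : B -> B -> Prop) : Prop :=
  exists (f : A -> B) (g : B -> A),
    [/\ forall u, X u -> Y (f u),
        forall x, Y x -> X (g x),
        forall u, X u -> g (f u) = u,
        forall x, Y x -> f (g x) = x
      & forall u v, X u -> X v -> (leX u v <-> leY (f u) (f v))].

(* zeta m = e^{2 pi i / m}  (m.-root (-1) = e^{i pi / m}, minimal argument) *)
Definition zeta (m : nat) : algC := (m.-root (-1)) ^+ 2.

Definition in_Gddn (d n : nat) (M : 'M[algC]_n) : Prop :=
  exists s : 'S_n,
    [/\ forall i j, M i j != 0 <-> i = s j,
        forall j, (M (s j) j) ^+ d = 1
      & \prod_j M (s j) j = 1].

Definition reflG (d n : nat) (M : 'M[algC]_n) : Prop :=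
  in_Gddn d M /\ \rank (M - 1%:M)%R = 1%N.

Definition leG (d n : nat) : 'M[algC]_n -> 'M[algC]_n -> Prop :=
  abs_le (@mulmx algC n n n) 1%:M (@invmx algC n) (@reflG d n).

(* Coxeter elements: e^{2 pi i/h}-regular elements, h = d(n-1) the Coxeter number *)
Definition coxeterG (d n : nat) (g : 'M[algC]_n) : Prop :=
  in_Gddn d g /\
  exists v : 'cV[algC]_n,
    g *m v = zeta (d * n.-1) *: v /\ forall t, reflG d t -> t *m v != v.

Definition parabolic_coxeterG (d n : nat) (w : 'M[algC]_n) : Prop :=
  in_Gddn d w /\ exists g, coxeterG d g /\ leG d w g.

Definition intervalG (d n : nat) (w : 'M[algC]_n) (u : 'M[algC]_n) : Prop :=
  in_Gddn d u /\ leG d 1%:M u /\ leG d u w.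

(* the simultaneous cycle ((ks_0^{(ts_0)} ... ks_{k-1}^{(ts_{k-1})})), other colored
   integers fixed; columns = images of basis vectors, colored integer j^{(s)} = zeta^s e_j *)
Definition sim_cycle (d n : nat) (ks : seq 'I_n) (ts : seq int) : 'M[algC]_n :=
  \matrix_(i, j)
    if j \in ks then
      let m := index j ks in
      let m' := (m.+1 %% size ks)%N in
      (if i == nth j ks m' then zeta d ^ (nth 0%Z ts m' - nth 0%Z ts m) else 0)
    else (i == j)%:R.

(* ---------- NC_{G(1,1,k)} : the interval [eps, (1 2 ... k)] in S_k ---------- *)
Definition long_cycle (k : nat) : 'S_k := perm (@ordS_inj k).

Definition transpositionS (k : nat) (t : 'S_k) : Prop :=
  exists i j : 'I_k, i != j /\ t = tperm i j.

Definition leS (k : nat) : 'S_k -> 'S_k -> Prop :=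
  abs_le (fun a b => (a * b)%g) 1%g (fun a => (a^-1)%g) (@transpositionS k).

Definition NC_interval (k : nat) (u : 'S_k) : Prop :=
  leS 1%g u /\ leS u (long_cycle k).

(* Conjugation by a diagonal matrix D of d-th roots of unity, built from the
   colours ts, embeds the permutations of the positions ks into G(d,d,n), sends
   transpositions to reflections, and sends the k-cycle to the simultaneous
   cycle w.  Every g in G(d,d,n) has absolute length at least rank (g - 1), a
   bound attained on the image of S_k by factoring into transpositions, so the
   embedding preserves absolute length and absolute order.  Conversely, u <=_T w
   forces rank (u - 1) + rank (u^-1 w - 1) = rank (w - 1), hence u fixes every
   row vector fixed by w: the basis vectors outside ks and the row of D.  A
   monomial matrix with these fixed vectors is the image of a permutation of ks,
   so [1, w] is the image of the interval below the k-cycle. *)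

From mathcomp Require Import all_boot all_order all_algebra all_fingroup all_field.
From mathcomp Require Import zify.
Set Implicit Arguments. Unset Strict Implicit. Unset Printing Implicit Defensive.
Import Order.TTheory GRing.Theory Num.Theory.

Section AbsLength.
Variables (A : Type) (mul : A -> A -> A) (one : A) (inv : A -> A) (T : A -> Prop).

Lemma abs_len_uniq x a b :
  is_abs_len mul one T x a -> is_abs_len mul one T x b -> a = b.
Proof. by case=> fa ha [fb hb]; apply/eqP; rewrite eqn_leq ha // hb. Qed.

Lemma abs_leE u v a b c :
    is_abs_len mul one T v a -> is_abs_len mul one T u b ->
    is_abs_len mul one T (mul (inv u) v) c ->
  abs_le mul one inv T u v <-> a = (b + c)%N.
Proof.
move=> ha hb hc; split; last by move=> e; exists a, b, c.
case=> a' [b' [c' [ha' hb' hc']]].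
by rewrite (abs_len_uniq ha ha') (abs_len_uniq hb hb') (abs_len_uniq hc hc').
Qed.

Lemma factor_len_map (B : Type) (mulB : B -> B -> B) (oneB : B) (TB : B -> Prop)
    (f : A -> B) x m :
    (forall a b, f (mul a b) = mulB (f a) (f b)) -> f one = oneB ->
    (forall t, T t -> TB (f t)) ->
  factor_len mul one T x m -> factor_len mulB oneB TB (f x) m.
Proof.
move=> fM f1 fT [s [<- [sT <-]]]; exists (map f s); rewrite size_map.
split=> //; split=> [i lt_i|]; first by rewrite (nth_map one) //; apply/fT/sT.
by elim: s {sT} => [|y s IHs] //=; rewrite fM IHs.
Qed.

End AbsLength.

Section SeqPerm.
Variables (T : finType) (ks : seq T).
Hypothesis uniq_ks : uniq ks.
Local Notation k := (size ks).

Definition kth (m : 'I_k) : T := tnth (in_tuple ks) m.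

Lemma mem_kth m : kth m \in ks.
Proof. exact: mem_tnth. Qed.

Lemma index_kth m : index (kth m) ks = m.
Proof. by rewrite /kth (tnth_nth (kth m)) index_uniq. Qed.

Lemma kth_inj : injective kth.
Proof. by move=> a b e; apply: val_inj; rewrite /= -index_kth e index_kth. Qed.

Lemma kth_ind (P : T -> Prop) :
  (forall m, P (kth m)) -> (forall x, x \notin ks -> P x) -> forall x, P x.
Proof.
move=> Pks Pout x; case: (boolP (x \in ks)) => [x_ks|]; last exact: Pout.
have lt_x : (index x ks < k)%N by rewrite index_mem.
suff -> : x = kth (Ordinal lt_x) by [].
by rewrite /kth (tnth_nth x) nth_index.
Qed.

Definition seq_perm_fun (p : 'S_k) (x : T) : T :=
  if insub (index x ks) is Some m then kth (p m) else x.

Lemma seq_perm_funE p m : seq_perm_fun p (kth m) = kth (p m).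
Proof. by rewrite /seq_perm_fun index_kth valK. Qed.

Lemma seq_perm_fun_id p x : x \notin ks -> seq_perm_fun p x = x.
Proof. by move=> x_ks; rewrite /seq_perm_fun insubF // index_mem (negbTE x_ks). Qed.

Lemma seq_perm_fun_inj p : injective (seq_perm_fun p).
Proof.
move=> x y; elim/kth_ind: x => [a|x x_ks]; elim/kth_ind: y => [b|y y_ks];
  rewrite ?seq_perm_funE ?seq_perm_fun_id //.
- by move/kth_inj/perm_inj->.
- by move=> e; move: y_ks; rewrite -e mem_kth.
- by move=> e; move: x_ks; rewrite e mem_kth.
Qed.

Definition seq_perm p : {perm T} := perm (@seq_perm_fun_inj p).

Lemma seq_permE p m : seq_perm p (kth m) = kth (p m).
Proof. by rewrite permE seq_perm_funE. Qed.

Lemma seq_perm_id p x : x \notin ks -> seq_perm p x = x.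
Proof. by move=> x_ks; rewrite permE seq_perm_fun_id. Qed.

Lemma seq_permM p q : seq_perm (p * q) = (seq_perm p * seq_perm q)%g.
Proof.
apply/permP; elim/kth_ind => [m|x x_ks]; rewrite permM.
  by rewrite !seq_permE permM.
by rewrite !seq_perm_id.
Qed.

Lemma seq_perm1 : seq_perm 1 = 1%g.
Proof.
by apply/permP; elim/kth_ind => [m|x x_ks]; rewrite perm1 ?seq_permE ?seq_perm_id ?perm1.
Qed.

Lemma seq_permV p : seq_perm p^-1 = (seq_perm p)^-1%g.
Proof. by apply/esym/eqP; rewrite eq_invg_mul -seq_permM mulgV seq_perm1. Qed.

Lemma seq_perm_tperm i j : seq_perm (tperm i j) = tperm (kth i) (kth j).
Proof.
apply/permP; elim/kth_ind => [m|x x_ks].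
  by rewrite seq_permE -(inj_tperm _ _ _ kth_inj).
rewrite seq_perm_id // tpermD //; apply: contraNneq x_ks => <-; exact: mem_kth.
Qed.

Lemma seq_perm_inj : injective seq_perm.
Proof. by move=> p q e; apply/permP => m; apply: kth_inj; rewrite -!seq_permE e. Qed.

Lemma seq_perm_onto (s : {perm T}) :
  (forall x, x \notin ks -> s x = x) -> exists q, s = seq_perm q.
Proof.
move=> s_id.
have mem_s x : (s x \in ks) = (x \in ks).
  apply/idP/idP; apply: contraTT => out.
    by rewrite s_id.
  by rewrite -(perm_inj (s_id _ out)).
have lt_q (m : 'I_k) : (index (s (kth m)) ks < k)%N by rewrite index_mem mem_s mem_kth.
pose q m := Ordinal (lt_q m).
have kth_q m : kth (q m) = s (kth m).
  by rewrite /kth (tnth_nth (kth m)) /= nth_index // mem_s mem_kth.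
have inj_q : injective q by move=> a b /(congr1 kth); rewrite !kth_q => /perm_inj/kth_inj.
exists (perm inj_q); apply/permP; elim/kth_ind => [m|x x_ks].
  by rewrite seq_permE permE kth_q.
by rewrite s_id ?seq_perm_id.
Qed.

End SeqPerm.

Local Open Scope ring_scope.

Section FixedSpace.
Variables (F : fieldType) (n : nat).
Implicit Types A B C : 'M[F]_n.

Lemma mulmx1_invmx A B : A *m B = 1%:M -> invmx A = B.
Proof.
move=> AB1; have [uA _] := mulmx1_unit AB1.
by rewrite -[invmx A]mulmx1 -AB1 mulmxA mulVmx // mul1mx.
Qed.

Lemma mxrank_conj A A' B : A *m A' = 1%:M -> \rank (A *m B *m A') = \rank B.
Proof.
move=> AA'1; have [uA uA'] := mulmx1_unit AA'1.
rewrite mxrankMfree ?row_free_unit //.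
by apply/eqmx_rank/eqmxMunitP; exists A.
Qed.

Lemma mxrank_tr_sub1 A : \rank (A^T - 1%:M) = \rank (A - 1%:M).
Proof. by rewrite -mxrank_tr linearB /= trmxK tr_scalar_mx. Qed.

Lemma mxrank_mul_sub1 A B :
  (\rank (A *m B - 1%:M)%R <= \rank (A - 1%:M)%R + \rank (B - 1%:M)%R)%N.
Proof.
have -> : A *m B - 1%:M = (A - 1%:M) *m B + (B - 1%:M).
  by rewrite mulmxBl mul1mx addrA subrK.
by apply: leq_trans (mxrank_add _ _) _; rewrite leq_add2r mxrankM_maxl.
Qed.

Lemma factor_len_rank (P : 'M[F]_n -> Prop) A m :
    (forall t, P t -> (\rank (t - 1%:M)%R <= 1)%N) ->
  factor_len (@mulmx F n n n) 1%:M P A m -> (\rank (A - 1%:M)%R <= m)%N.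
Proof.
move=> rankP [s [<- [sP <-]]]; elim: s sP => [|t s IHs] sP /=.
  by rewrite subrr mxrank0.
apply: leq_trans (mxrank_mul_sub1 _ _) _; rewrite -add1n leq_add ?(rankP _ (sP 0%N _)) //.
by apply: IHs => i; apply: (sP i.+1).
Qed.

Lemma sub_kermx_sub1 m (C : 'M[F]_(m, n)) A :
  (C <= kermx (A - 1%:M))%MS = (C *m A == C).
Proof. by rewrite sub_kermx mulmxBr mulmx1 subr_eq0. Qed.

(* The common fixed space of [A] and [B] lies in that of [A *m B], and the rank
   hypothesis makes its dimension at least that of the latter. *)
Lemma kermx_sub1M_sub A B :
    (\rank (A - 1%:M)%R + \rank (B - 1%:M)%R = \rank (A *m B - 1%:M)%R)%N ->
  (kermx (A *m B - 1%:M) <= kermx (A - 1%:M))%MS.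
Proof.
move=> rank_add.
set KA := kermx (A - 1%:M); set KB := kermx (B - 1%:M); set KAB := kermx (A *m B - 1%:M).
have capK : (KA :&: KB <= KAB)%MS.
  have /eqP fixA : (KA :&: KB)%MS *m A == (KA :&: KB)%MS by rewrite -sub_kermx_sub1 capmxSl.
  by rewrite sub_kermx_sub1 mulmxA fixA -sub_kermx_sub1 capmxSr.
have [le_cap eq_cap] := mxrank_leqif_sup capK.
suff KAB_cap : (KAB <= KA :&: KB)%MS by exact: submx_trans KAB_cap (capmxSl _ _).
rewrite -eq_cap eqn_leq le_cap /=.
have := mxrank_sum_cap KA KB; have := rank_leq_col (KA + KB)%MS.
rewrite !mxrank_ker -rank_add.
have := rank_leq_col (A - 1%:M); have := rank_leq_col (B - 1%:M); lia.
Qed.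

End FixedSpace.

Section PermMx.
Variables (F : fieldType) (n : nat).
Implicit Types (s : 'S_n) (x y : 'I_n).

Lemma mul_perm_mxE m (C : 'M[F]_(m, n)) s i j : (C *m perm_mx s) i j = C i (s^-1%g j).
Proof. by rewrite -[s]invgK -col_permE mxE invgK. Qed.

Lemma mxrank_tperm_sub1 x y : x != y ->
  \rank (perm_mx (tperm x y) - 1%:M : 'M[F]_n)%R = 1%N.
Proof.
move=> xy; pose u : 'cV[F]_n := delta_mx x 0 - delta_mx y 0.
pose v : 'rV[F]_n := delta_mx 0 y - delta_mx 0 x.
have uv : perm_mx (tperm x y) - 1%:M = u *m v.
  apply/matrixP => i j; rewrite !mxE big_ord1 !mxE !andbT !eqxx !andTb.
  case: (tpermP x y i) => [->|->|/eqP/negPf ix /eqP/negPf iy]; rewrite ?ix ?iy.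
  - by rewrite eqxx (negPf xy) subr0 mul1r !(eq_sym j).
  - by rewrite eqxx (eq_sym y x) (negPf xy) sub0r mulN1r opprB !(eq_sym j).
  - by rewrite !subrr mul0r.
apply/eqP; rewrite eqn_leq uv (leq_trans (mxrankM_maxl _ _) (rank_leq_col _)) /=.
rewrite lt0n mxrank_eq0 -uv; apply: contra_neq xy => /matrixP/(_ x y).
by rewrite !mxE tpermL eqxx; case: eqP => // _; rewrite subr0 => /eqP; rewrite oner_eq0.
Qed.

Lemma mul_delta_perm_mx s x :
  (delta_mx 0 x : 'rV[F]_n) *m perm_mx s = delta_mx 0 (s x).
Proof. by rewrite -rowE perm_mxEsub row_rowsub row1. Qed.

(* [tperm y (s^-1 y) * s] fixes [y] and every row vector fixed by [s]. *)
Lemma mxrank_tpermM_sub1_lt s y : s y != y ->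
  (\rank (perm_mx (tperm y (s^-1%g y) * s) - 1%:M : 'M[F]_n)%R
     < \rank (perm_mx s - 1%:M : 'M[F]_n)%R)%N.
Proof.
move=> sy; set t := tperm y (s^-1%g y).
set K := kermx (perm_mx s - 1%:M : 'M[F]_n)%R.
set K' := kermx (perm_mx (t * s) - 1%:M : 'M[F]_n)%R.
have /eqP Ks : K *m perm_mx s == K by rewrite -sub_kermx_sub1.
have Kt : K *m perm_mx t = K.
  apply/matrixP => i x; rewrite mul_perm_mxE tpermV.
  have K_sV z : K i (s^-1%g z) = K i z by rewrite -mul_perm_mxE Ks.
  by case: tpermP => [->|->|//]; rewrite K_sV.
have KK' : (K <= K')%MS by rewrite sub_kermx_sub1 perm_mxM mulmxA Kt Ks.
have e_y_K' : ((delta_mx 0 y : 'rV[F]_n) <= K')%MS.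
  by rewrite sub_kermx_sub1 mul_delta_perm_mx permM /t tpermL permKV.
have e_y_K : ~~ ((delta_mx 0 y : 'rV[F]_n) <= K)%MS.
  rewrite sub_kermx_sub1 mul_delta_perm_mx; apply/eqP => /matrixP/(_ 0 (s y)).
  by rewrite !mxE !eqxx /= (negPf sy) => /eqP; rewrite oner_eq0.
have lt_K : (\rank K < \rank K')%N.
  have [le_K eq_K] := mxrank_leqif_sup KK'; rewrite ltn_neqAle le_K andbT eq_K.
  by apply: contra e_y_K => /(submx_trans e_y_K').
move: lt_K; rewrite /K /K' !mxrank_ker.
have := rank_leq_col (perm_mx s - 1%:M : 'M[F]_n)%R; lia.
Qed.

End PermMx.

Section Monomial.
Variables (F : fieldType) (n : nat).
Implicit Types (s : 'S_n) (M : 'M[F]_n).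

Definition monomial_mx s M := forall i j, M i j != 0 <-> i = s j.

Lemma mul_monomial_mxE {s M} : monomial_mx s M ->
  forall m (C : 'M[F]_(m, n)) i j, (C *m M) i j = C i (s j) * M (s j) j.
Proof.
move=> sM m C i j; rewrite mxE (bigD1 (s j)) //= big1 ?addr0 // => l /eqP l_sj.
have /negPn/eqP-> : ~~ (M l j != 0) by apply/negP => /sM.
by rewrite mulr0.
Qed.

Lemma monomial_mx_perm_uniq s s' M : monomial_mx s M -> monomial_mx s' M -> s = s'.
Proof. by move=> sM s'M; apply/permP => j; apply/(s'M _ j)/(sM _ j). Qed.

Lemma monomial_mx_unit s M : monomial_mx s M -> M \in unitmx.
Proof.
move=> sM; set d : 'rV[F]_n := \row_i M i (s^-1%g i).
have -> : M = diag_mx d *m perm_mx s^-1.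
  apply/matrixP => i j; rewrite mul_diag_mx !mxE.
  have [<-|ne] := eqVneq (s^-1%g i) j; first by rewrite mulr1.
  rewrite mulr0; apply/eqP/negPn/negP => /sM e.
  by move: ne; rewrite e permK eqxx.
rewrite unitmx_mul unitmx_perm andbT unitmxE det_diag unitfE.
by apply/prodf_neq0 => i _; rewrite mxE; apply/sM; rewrite permKV.
Qed.

End Monomial.

Section Gauge.
Variables (F : fieldType) (n : nat) (v : 'rV[F]_n).
Hypothesis v_neq0 : forall j, v 0 j != 0.
Implicit Types (s : 'S_n) (M N : 'M[F]_n).

Definition gauged M := diag_mx (\row_j (v 0 j)^-1) *m M *m diag_mx v.

Lemma gaugedE M i j : gauged M i j = (v 0 i)^-1 * M i j * v 0 j.
Proof. by rewrite /gauged mul_mx_diag mul_diag_mx !mxE. Qed.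

Lemma gauged_permE s i j : gauged (perm_mx s) i j = (v 0 i)^-1 * (s i == j)%:R * v 0 j.
Proof. by rewrite gaugedE !mxE. Qed.

Lemma diag_gaugeV : diag_mx (\row_j (v 0 j)^-1) *m diag_mx v = 1%:M.
Proof.
rewrite mulmx_diag -diag_const_mx; congr diag_mx.
by apply/matrixP => i j; rewrite !mxE mulVf.
Qed.

Lemma gaugedM M N : gauged (M *m N) = gauged M *m gauged N.
Proof.
by rewrite /gauged !mulmxA -[_ *m diag_mx v *m _]mulmxA (mulmx1C diag_gaugeV) mulmx1.
Qed.

Lemma gauged_sub1 M : gauged M - 1%:M = gauged (M - 1%:M).
Proof. by rewrite /gauged mulmxBr mulmxBl mulmx1 diag_gaugeV. Qed.

Lemma mxrank_gauged_sub1 M : \rank (gauged M - 1%:M) = \rank (M - 1%:M).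
Proof. by rewrite gauged_sub1 mxrank_conj ?diag_gaugeV. Qed.

Lemma gauged_perm_monomial s : monomial_mx s^-1 (gauged (perm_mx s)).
Proof.
move=> a b; rewrite gauged_permE (canF_eq (permK s)).
have [->|ne] := eqVneq a (s^-1%g b); first by rewrite mulr1 mulf_neq0 ?invr_eq0.
by rewrite mulr0n mulr0 mul0r eqxx; split=> // e; rewrite e eqxx in ne.
Qed.

Lemma gauged_perm_fixed_row s : v *m gauged (perm_mx s) = v.
Proof.
apply/matrixP => i j; rewrite (mul_monomial_mxE (gauged_perm_monomial s)).
by rewrite gauged_permE permKV eqxx mulr1 [i]ord1 mulVKf.
Qed.

Lemma monomial_fixed_row {s M} :
  monomial_mx s M -> v *m M = v -> M = gauged (perm_mx s^-1).
Proof.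
move=> sM vM; apply/matrixP => i j; rewrite gauged_permE.
have [<-|ne] := eqVneq (s^-1%g i) j; last first.
  rewrite mulr0 mul0r; apply/eqP/negPn/negP => /sM e.
  by move: ne; rewrite e permK eqxx.
have /matrixP/(_ 0 (s^-1%g i)) := vM; rewrite (mul_monomial_mxE sM) permKV => <-.
by rewrite mulr1 mulKf.
Qed.

End Gauge.

Lemma monomial_mx_in_Gddn d n (M : 'M[algC]_n) : in_Gddn d M -> exists s, monomial_mx s M.
Proof. by case=> s [sM _ _]; exists s. Qed.

Lemma gauged_perm_in_Gddn d n (v : 'rV[algC]_n) (s : 'S_n) :
    (forall j, v 0 j != 0) -> (forall j, v 0 j ^+ d = 1) ->
  in_Gddn d (gauged v (perm_mx s)).
Proof.
move=> v_neq0 v_d; exists s^-1%g; split; first exact: gauged_perm_monomial.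
- by move=> j; rewrite gauged_permE permKV eqxx mulr1 exprMn exprVn !v_d invr1 mulr1.
rewrite (eq_bigr (fun j => (v 0 (s^-1%g j))^-1 * v 0 j)) => [|j _]; last first.
  by rewrite gauged_permE permKV eqxx mulr1.
rewrite big_split /= prodfV [X in _ * X](reindex_inj (@perm_inj _ s^-1%g)) /=.
by rewrite mulVf //; apply/prodf_neq0 => j _.
Qed.

Lemma zeta_neq0 d : (0 < d)%N -> zeta d != 0.
Proof. by move=> d_gt0; rewrite expf_eq0 /= rootC_eq0 // oppr_eq0 oner_eq0. Qed.

Lemma zeta_expr d : (0 < d)%N -> zeta d ^+ d = 1.
Proof. by move=> d_gt0; rewrite /zeta exprAC rootCK // sqrrN expr1n. Qed.

Lemma zeta_expz_expr d (t : int) : (0 < d)%N -> (zeta d ^ t) ^+ d = 1.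
Proof.
by move=> d_gt0; rewrite exprnP exprzAC -exprnP zeta_expr // exp1rz.
Qed.

Section Gddn.
Variables (d n : nat) (ks : seq 'I_n) (ts : seq int).
Hypotheses (d_gt0 : (0 < d)%N) (uniq_ks : uniq ks).
Local Notation k := (size ks).
Local Notation seq_perm := (seq_perm uniq_ks).

Definition colour_gauge : 'rV[algC]_n := \row_j zeta d ^ (- nth 0 ts (index j ks)).

Lemma colour_gauge_neq0 j : colour_gauge 0 j != 0.
Proof. by rewrite mxE expfz_neq0 ?zeta_neq0. Qed.

Definition twist (p : 'S_k) : 'M[algC]_n := gauged colour_gauge (perm_mx (seq_perm p)).

Lemma twistM p q : twist (p * q) = twist p *m twist q.
Proof. by rewrite /twist seq_permM perm_mxM (gaugedM colour_gauge_neq0). Qed.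

Lemma twist1 : twist 1 = 1%:M.
Proof. by rewrite /twist seq_perm1 perm_mx1 /gauged mulmx1 (diag_gaugeV colour_gauge_neq0). Qed.

Lemma twist_inj : injective twist.
Proof.
move=> p q e; apply: seq_perm_inj; apply: invg_inj.
apply: (monomial_mx_perm_uniq (M := twist p)).
  exact: gauged_perm_monomial colour_gauge_neq0 _.
by rewrite e; apply: gauged_perm_monomial colour_gauge_neq0 _.
Qed.

Lemma twist_in_Gddn p : in_Gddn d (twist p).
Proof.
apply: gauged_perm_in_Gddn colour_gauge_neq0 _ => j.
by rewrite mxE zeta_expz_expr.
Qed.

Lemma invmx_twist p : invmx (twist p) = twist p^-1.
Proof. by apply: mulmx1_invmx; rewrite -twistM mulgV twist1. Qed.

Definition tlen p := \rank (perm_mx (seq_perm p) - 1%:M : 'M[algC]_n).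

Lemma mxrank_twist_sub1 p : \rank (twist p - 1%:M) = tlen p.
Proof. exact: mxrank_gauged_sub1 colour_gauge_neq0 _. Qed.

Lemma tlen1 : tlen 1 = 0%N.
Proof. by rewrite /tlen seq_perm1 perm_mx1 subrr mxrank0. Qed.

Lemma tlenV p : tlen p^-1 = tlen p.
Proof. by rewrite /tlen seq_permV -tr_perm_mx mxrank_tr_sub1. Qed.

Lemma tlen_conj p q : tlen (q * p * q^-1) = tlen p.
Proof.
rewrite /tlen !seq_permM seq_permV !perm_mxM.
set Q := perm_mx (seq_perm q); set Q' := perm_mx (seq_perm q)^-1.
have QQ' : Q *m Q' = 1%:M by rewrite -perm_mxM mulgV perm_mx1.
set P := perm_mx (seq_perm p).
have -> : Q *m P *m Q' - 1%:M = Q *m (P - 1%:M) *m Q'.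
  by rewrite mulmxBr mulmxBl mulmx1 QQ'.
exact: mxrank_conj QQ'.
Qed.

Lemma twist_refl i j : i != j -> reflG d (twist (tperm i j)).
Proof.
move=> ij; split; first exact: twist_in_Gddn.
by rewrite mxrank_twist_sub1 /tlen seq_perm_tperm mxrank_tperm_sub1 // (inj_eq (kth_inj uniq_ks)).
Qed.

Local Notation factS := (factor_len (fun a b : 'S_k => (a * b)%g) 1%g (@transpositionS k)).
Local Notation factG := (factor_len (@mulmx algC n n n) 1%:M (@reflG d n)).

Lemma factS_twist p m : factS p m -> factG (twist p) m.
Proof.
apply: factor_len_map => [a b||t [i [j [ij ->]]]]; [exact: twistM|exact: twist1|].
exact: twist_refl.
Qed.

Lemma reflG_rank (t : 'M[algC]_n) : reflG d t -> (\rank (t - 1%:M)%R <= 1)%N.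
Proof. by case=> _ ->. Qed.

Lemma tlen_leq p m : factS p m -> (tlen p <= m)%N.
Proof. by rewrite -mxrank_twist_sub1 => /factS_twist; apply: factor_len_rank reflG_rank. Qed.

Lemma tlen_tpermM_lt p : p != 1%g ->
  exists2 t, transpositionS t & (tlen (t * p) < tlen p)%N.
Proof.
move=> p1; have [x px] : exists x, p x != x.
  apply/existsP; rewrite -negb_forall; apply: contra p1 => /forallP p_id.
  by apply/eqP/permP => x; rewrite perm1; apply/eqP.
exists (tperm x (p^-1%g x)).
  by exists x, (p^-1%g x); split=> //; apply: contra px => /eqP {1}->; rewrite permKV.
rewrite /tlen seq_permM seq_perm_tperm -(seq_permE uniq_ks) seq_permV.
by apply: mxrank_tpermM_sub1_lt; rewrite seq_permE (inj_eq (kth_inj uniq_ks)).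
Qed.

Lemma factS_tlen p : factS p (tlen p).
Proof.
have [N] := ubnP (tlen p); elim: N p => // N IHN p lt_pN.
have [->|p1] := eqVneq p 1%g; first by rewrite tlen1; exists [::].
have [t tT lt_tp] := tlen_tpermM_lt p1.
have [s [size_s [sT prod_s]]] := IHN _ (leq_trans lt_tp lt_pN).
have fact_p : factS p (tlen (t * p)).+1.
  exists (t :: s); split; first by rewrite /= size_s.
  split=> [[|i]|] //=; first by rewrite ltnS; apply: sT.
  have tt1 : (t * t)%g = 1%g by have [i [j [_ ->]]] := tT; rewrite tperm2.
  by rewrite prod_s mulgA tt1 mul1g.
suff -> : tlen p = (tlen (t * p)).+1 by [].
by apply/eqP; rewrite eqn_leq lt_tp tlen_leq.
Qed.

Lemma abs_lenS p : is_abs_len (fun a b : 'S_k => (a * b)%g) 1%g (@transpositionS k) p (tlen p).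
Proof. by split=> [|m]; [apply: factS_tlen | apply: tlen_leq]. Qed.

Lemma abs_lenG p : is_abs_len (@mulmx algC n n n) 1%:M (@reflG d n) (twist p) (tlen p).
Proof.
split=> [|m]; first exact/factS_twist/factS_tlen.
by rewrite -mxrank_twist_sub1; apply: factor_len_rank reflG_rank.
Qed.

Lemma leS_tlen x y : leS x y <-> tlen y = (tlen x + tlen (x^-1 * y))%N.
Proof. exact: abs_leE (abs_lenS y) (abs_lenS x) (abs_lenS _). Qed.

Lemma leG_twist x y :
  leG d (twist x) (twist y) <-> tlen y = (tlen x + tlen (x^-1 * y))%N.
Proof.
apply: abs_leE (abs_lenG y) (abs_lenG x) _.
by rewrite invmx_twist -twistM; apply: abs_lenG.
Qed.

Lemma leG_twistV x y : leG d (twist x^-1) (twist y^-1) <-> leS x y.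
Proof.
rewrite leG_twist leS_tlen !tlenV invgK.
suff -> : tlen (x * y^-1) = tlen (x^-1 * y) by [].
have -> : (x * y^-1 = x * (y^-1 * x) * x^-1)%g by rewrite mulgA mulgK.
by rewrite tlen_conj -tlenV invMg invgK.
Qed.

Lemma twist_fixed_delta p j : j \notin ks ->
  (delta_mx 0 j : 'rV[algC]_n) *m twist p = delta_mx 0 j.
Proof.
move=> j_ks; rewrite -rowE; apply/rowP => b.
rewrite mxE gauged_permE seq_perm_id // !mxE eq_sym.
have [->|_] := eqVneq b j; last by rewrite mulr0 mul0r.
by rewrite mulr1 mulVf ?expfz_neq0 ?zeta_neq0.
Qed.

Lemma interval_twist u p :
  in_Gddn d u -> leG d u (twist p) -> exists q, u = twist q.
Proof.
move=> uG [a [b [c [la lb lc a_eq]]]].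
have [s sM] := monomial_mx_in_Gddn uG; have u_unit := monomial_mx_unit sM.
set X := invmx u *m twist p in lc; have uX : u *m X = twist p by rewrite mulKVmx.
have rank_add : (\rank (u - 1%:M)%R + \rank (X - 1%:M)%R = \rank (u *m X - 1%:M)%R)%N.
  apply/eqP; rewrite eqn_leq mxrank_mul_sub1 andbT uX mxrank_twist_sub1.
  rewrite (abs_len_uniq (abs_lenG p) la) a_eq.
  by rewrite leq_add ?(factor_len_rank reflG_rank lb.1) ?(factor_len_rank reflG_rank lc.1).
have fix_u (r : 'rV[algC]_n) : r *m twist p = r -> r *m u = r.
  move=> /eqP r_w; apply/eqP; rewrite -sub_kermx_sub1.
  by apply: submx_trans (kermx_sub1M_sub rank_add); rewrite uX sub_kermx_sub1.
have s_id x : x \notin ks -> s^-1%g x = x.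
  move=> x_ks; have /rowP/(_ x) := fix_u _ (twist_fixed_delta p x_ks).
  rewrite (mul_monomial_mxE sM) !mxE !eqxx.
  have [sx _|_] := eqVneq (s x) x; first by rewrite -{1}sx permK.
  by rewrite mul0r => /esym/eqP; rewrite oner_eq0.
have [q sq] := seq_perm_onto uniq_ks s_id.
exists q; rewrite /twist -sq; apply: (monomial_fixed_row colour_gauge_neq0 sM).
by apply/fix_u/gauged_perm_fixed_row/colour_gauge_neq0.
Qed.

Lemma sim_cycle_twist : sim_cycle d ks ts = twist (long_cycle k)^-1.
Proof.
apply/matrixP => i j; rewrite /twist gauged_permE seq_permV (canF_eq (permKV _)) !mxE.
elim/(kth_ind (ks := ks)): j => [m|j j_ks]; last first.
  rewrite (negPf j_ks) seq_perm_id //; have [->|_] := eqVneq i j; last by rewrite mulr0 mul0r.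
  by rewrite mulr1 mulVf ?expfz_neq0 ?zeta_neq0.
have kth_next : nth (kth m) ks (m.+1 %% k) = kth (ordS m).
  by rewrite {2}/kth (tnth_nth (kth m)).
rewrite mem_kth /= index_kth // seq_permE /long_cycle permE kth_next.
have [->|_] := eqVneq i (kth (ordS m)); last by rewrite mulr0 mul0r.
by rewrite index_kth // mulr1 invr_expz opprK -expfzDr ?zeta_neq0.
Qed.

End Gddn.

Theorem lemma3p2 (d n : nat) (w : 'M[algC]_n) (ks : seq 'I_n) (ts : seq int) :
  (2 <= d)%N -> (2 <= n)%N ->
  parabolic_coxeterG d w ->
  uniq ks -> size ts = size ks ->
  w = sim_cycle d ks ts ->
  poset_iso (intervalG d w) (@leG d n)
            (@NC_interval (size ks)) (@leS (size ks)).
Proof.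
move=> d_ge2 _ _ uniq_ks _ ->; have d_gt0 : (0 < d)%N by apply: ltnW.
rewrite sim_cycle_twist //; set c := long_cycle _.
pose phi x := twist d ts uniq_ks x^-1.
have le_phi x y : leG d (phi x) (phi y) <-> leS x y := leG_twistV ts d_gt0 uniq_ks x y.
have phi_inj : injective phi by move=> x y /(twist_inj d_gt0)/invg_inj.
have phi1 : phi 1%g = 1%:M by rewrite /phi invg1 twist1.
have in_phi u : intervalG d (phi c) u -> exists x, u = phi x.
  case=> uG [_ /(interval_twist d_gt0 uG)[q ->]].
  by exists q^-1%g; rewrite /phi invgK.
pose f u := odflt 1%g [pick x | u == phi x].
have f_phi x : f (phi x) = x.
  by rewrite /f; case: pickP => [y /eqP/phi_inj//|/(_ x)]; rewrite eqxx.
exists f, phi; split.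
- move=> u /[dup] /in_phi[x ->] [_ [le1 lec]]; rewrite f_phi.
  by split; apply/le_phi; rewrite ?phi1.
- move=> x [le1 lec]; split; first exact: twist_in_Gddn.
  by split; [rewrite -phi1|]; apply/le_phi.
- by move=> u /in_phi[x ->]; rewrite f_phi.
- by move=> x _; apply: f_phi.
by move=> u v /in_phi[x ->] /in_phi[y ->]; rewrite !f_phi.
Qed.
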